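(* Let $f\in\mathbb C[x_1,\dots,x_n]$ be nonzero, $\ell\in\mathbb N$ and $\omega\in\mathbb R^n\setminus\{0\}$, and let $\tau=\tau_\omega$. Then $$\mathrm{in}_{(-\omega,\omega)}\Big(\mathrm{Ann}\big(\tfrac1{f^\ell}\big)\Big)\subseteq\mathrm{Ann}\Big(\tfrac1{f_\tau^\ell}\Big).$$
   Context: $D_n$ is the $n$-th Weyl algebra ($\partial_ix_j=x_j\partial_i+\delta_{ij}$); ideals are left ideals. For $\omega\in\mathbb R^n$, the $(-\omega,\omega)$-weight of $x^\alpha\partial^\beta$ is $-\langle\omega,\alpha\rangle+\langle\omega,\beta\rangle$; $\mathrm{in}_{(-\omega,\omega)}(P)$ is the sum of the terms of maximal weight of the normally ordered expression of $P$, and $\mathrm{in}_{(-\omega,\omega)}(I)$ is the left ideal generated by the $\mathrm{in}_{(-\omega,\omega)}(P)$, $P\in I\setminus\{0\}$. For a nonzero rational function $g$, $\mathrm{Ann}(g)=\{P\in D_n:P\bullet g=0\}$ with $x_i\bullet g=x_ig$, $\partial_i\bullet g=\partial g/\partial x_i$. For $f=\sum_\gamma c_\gamma x^\gamma$: $\mathrm{Supp}(f)=\{\gamma:c_\gamma\ne0\}$, $\Gamma(f)$ its convex hull, $\mathrm{ord}_f(\omega)=\min\{\langle\gamma,\omega\rangle:\gamma\in\Gamma(f)\}$, $\tau_\omega=\{u\in\Gamma(f):\langle u,\omega\rangle=\mathrm{ord}_f(\omega)\}$, and for a face $\tau$, $f_\tau=\sum_{\gamma\in\tau\cap\mathrm{Supp}(f)}c_\gamma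 x^\gamma$. $\mathbb N=\{0,1,2,\dots\}$. *)

From HB Require Import structures.
From mathcomp Require Import all_boot all_order all_algebra.
From mathcomp Require Import fraction.
From mathcomp.multinomials Require Import mpoly.
From mathcomp.real_closed Require Import complex.
From mathcomp Require Import Rstruct.
From Stdlib Require Rdefinitions ClassicalEpsilon.

Set Implicit Arguments.
Unset Strict Implicit.
Unset Printing Implicit Defensive.
Import Order.TTheory GRing.Theory Num.Theory.
Local Open Scope ring_scope.

Notation RR := Rdefinitions.R.
Definition CC : Type := RR[i].
Notation "x %:F" := (@FracField.tofrac _ x).

Section Weyl.
Variable n : nat.

Notation Poly := {mpoly CC[n]}.
Notation RatF := {fraction Poly}.

(* An element of the Weyl algebra D_n is represented by its normally
   ordered expression  sum c_{a,b} x^a d^b  , encoded as the commutative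
   polynomial sum c_{a,b} X^a Y^b in 2n variables: variable (lshift n i)
   stands for x_i and variable (rshift n i) stands for d_i. *)
Definition Weyl := {mpoly CC[n + n]}.

Definition xpart (m : 'X_{1..n + n}) : 'X_{1..n} :=
  [multinom m (lshift n i) | i < n].
Definition dpart (m : 'X_{1..n + n}) : 'X_{1..n} :=
  [multinom m (rshift n i) | i < n].

(* Left multiplication by x_i and by d_i in D_n (normally ordered form):
   x_i . x^a d^b = x^(a+e_i) d^b ;
   d_i . x^a d^b = x^a d^(b+e_i) + a_i x^(a-e_i) d^b. *)
Definition weyl_x (i : 'I_n) (P : Weyl) : Weyl := 'X_(lshift n i) * P.
Definition weyl_d (i : 'I_n) (P : Weyl) : Weyl :=
  'X_(rshift n i) * P + mderiv (lshift n i) P.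

Definition weyl_mon_mul (a b : 'X_{1..n}) (P : Weyl) : Weyl :=
  foldr (fun i Q => iter (a i) (weyl_x i) Q)
    (foldr (fun i Q => iter (b i) (weyl_d i) Q) P (enum 'I_n)) (enum 'I_n).

Definition weyl_mul (A P : Weyl) : Weyl :=
  \sum_(m <- msupp A) A@_m *: weyl_mon_mul (xpart m) (dpart m) P.

Inductive lideal_gen (S : Weyl -> Prop) : Weyl -> Prop :=
| lg_base P : S P -> lideal_gen S P
| lg_zero : lideal_gen S 0
| lg_add P Q : lideal_gen S P -> lideal_gen S Q -> lideal_gen S (P + Q)
| lg_lmul A P : lideal_gen S P -> lideal_gen S (weyl_mul A P).

Definition weight (w : 'rV[RR]_n) (m : 'X_{1..n + n}) : RR :=
  \sum_(i < n) (- ((xpart m) i)%:R * w 0 i + ((dpart m) i)%:R * w 0 i).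

Definition in_form (w : 'rV[RR]_n) (P : Weyl) : Weyl :=
  \sum_(m <- msupp P | all (fun m' => weight w m' <= weight w m) (msupp P))
     P@_m *: 'X_[m].

Definition in_ideal (w : 'rV[RR]_n) (I : Weyl -> Prop) : Weyl -> Prop :=
  lideal_gen (fun Q => exists P, [/\ I P, P != 0 & Q = in_form w P]).

Definition frac_deriv (i : 'I_n) (g : RatF) : RatF :=
  let r := repr g in
  ((mderiv i (\n_r) * \d_r - \n_r * mderiv i (\d_r))%:F) / ((\d_r ^+ 2)%:F).

Definition mon_act (a b : 'X_{1..n}) (g : RatF) : RatF :=
  ('X_[a] : Poly)%:F *
  foldr (fun i h => iter (b i) (frac_deriv i) h) g (enum 'I_n).

Definition act (P : Weyl) (g : RatF) : RatF :=
  \sum_(m <- msupp P) ((P@_m)%:MP : Poly)%:F * mon_act (xpart m) (dpart m) g.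

Definition Ann (g : RatF) : Weyl -> Prop := fun P => act P g = 0.

Definition inv_pow (f : Poly) (l : nat) : RatF := ((f ^+ l)%:F)^-1.

Definition expv (m : 'X_{1..n}) : 'I_n -> RR := fun i => (m i)%:R.

Definition pairing (u : 'I_n -> RR) (w : 'rV[RR]_n) : RR :=
  \sum_(i < n) u i * w 0 i.

Definition newton_polytope (f : Poly) (u : 'I_n -> RR) : Prop :=
  exists lam : 'X_{1..n} -> RR,
    [/\ forall m, 0 <= lam m,
        \sum_(m <- msupp f) lam m = 1 &
        forall i, u i = \sum_(m <- msupp f) lam m * expv m i].

Definition face (f : Poly) (w : 'rV[RR]_n) (u : 'I_n -> RR) : Prop :=
  newton_polytope f u /\
  forall v, newton_polytope f v -> pairing u w <= pairing v w.

Definition face_poly (f : Poly) (w : 'rV[RR]_n) : Poly :=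
  \sum_(m <- msupp f)
     if ClassicalEpsilon.excluded_middle_informative (face f w (expv m))
     then f@_m *: 'X_[m] else 0.

End Weyl.

(* Ann(g) is a left ideal, so it suffices to show that in(P) annihilates
   1/f_tau^l for every nonzero P in Ann(1/f^l).  With d = ord_f(w), f_tau is
   w-homogeneous of degree d and every monomial of f - f_tau has w-degree > d.
   After clearing denominators, f^K * (x^a D^b)(1/f^l) is a polynomial whose
   monomials of least w-degree, namely (K - l) d - weight(x^a D^b), are those of
   f_tau^K * (x^a D^b)(1/f_tau^l); all its other monomials have larger degree.
   Summing over the monomials of P, the least-degree part of f^K * P(1/f^l) = 0
   is f_tau^K * in(P)(1/f_tau^l), which therefore vanishes. *)

From HB Require Import structures.
From mathcomp Require Import all_boot all_order all_algebra.
From mathcomp Require Import fraction generic_quotient.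
From mathcomp.multinomials Require Import mpoly.
From mathcomp.real_closed Require Import complex.
From mathcomp Require Import Rstruct.
From mathcomp Require Import ring zify.

Set Implicit Arguments.
Unset Strict Implicit.
Unset Printing Implicit Defensive.
Import Order.TTheory GRing.Theory Num.Theory.
Local Open Scope ring_scope.

Lemma eq_in_foldr (T : eqType) (R : Type) (f g : T -> R -> R) (z : R) (s : seq T) :
  (forall x, x \in s -> f x =1 g x) -> foldr f z s = foldr g z s.
Proof.
elim: s => [//|x s IH] fg /=; rewrite fg ?mem_head // IH // => y ys.
by apply: fg; rewrite in_cons ys orbT.
Qed.

Lemma foldr_iter_ind (I T : Type) (Q : T -> Prop) (F : I -> T -> T) (k : I -> nat)
    (x : T) (s : seq I) :
  (forall i y, Q y -> Q (F i y)) -> Q x ->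
  Q (foldr (fun i y => iter (k i) (F i) y) x s).
Proof.
move=> QF Qx; elim: s => [//|j s IH] /=.
by elim: (k j) => [//|t IHt] /=; apply: QF.
Qed.

Lemma foldr_iter_morph (I T U : Type) (h : T -> U) (F : I -> T -> T) (G : I -> U -> U)
    (k : I -> nat) (x : T) (s : seq I) :
  (forall i y, h (F i y) = G i (h y)) ->
  h (foldr (fun i y => iter (k i) (F i) y) x s) = foldr (fun i y => iter (k i) (G i) y) (h x) s.
Proof.
move=> hFG; elim: s => [//|j s IH] /=; rewrite -IH.
by elim: (k j) => [//|t IHt] /=; rewrite hFG IHt.
Qed.

Lemma foldr_iter_rel (I T U : Type) (V : nmodType) (Rel : V -> T -> U -> Prop)
    (F : I -> T -> T) (G : I -> U -> U) (c : I -> V) (k : I -> nat)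
    (t : V) (x : T) (y : U) (s : seq I) :
  (forall i t x y, Rel t x y -> Rel (t + c i) (F i x) (G i y)) -> Rel t x y ->
  Rel (t + \sum_(i <- s) c i *+ k i)
    (foldr (fun i z => iter (k i) (F i) z) x s) (foldr (fun i z => iter (k i) (G i) z) y s).
Proof.
move=> RFG Rxy; elim: s => [|j s IH] /=; first by rewrite big_nil addr0.
rewrite big_cons addrCA addrC; elim: (k j) => [|u IHu] /=; first by rewrite mulr0n addr0.
by rewrite mulrSr addrA; apply: RFG.
Qed.

Lemma seq_argmin (T : eqType) (d : Order.disp_t) (V : orderType d) (F : T -> V) (s : seq T) :
  s != [::] -> exists2 x, x \in s & forall y, y \in s -> (F x <= F y)%O.
Proof.
elim: s => [//|a [|b s] IH] _; first by exists a; rewrite ?mem_head // => y /[!inE] /eqP ->.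
have [x xs Fx] := IH isT; have [Fax|Fxa] := leP (F a) (F x).
  exists a; rewrite ?mem_head // => y /[!in_cons] /orP[/eqP -> //|/Fx].
  exact: le_trans.
exists x; first by rewrite in_cons xs orbT.
by move=> y /[!in_cons] /orP[/eqP -> |/Fx //]; apply: ltW.
Qed.

Lemma sum_enum_ord (V : nmodType) (n : nat) (F : 'I_n -> V) :
  \sum_(i <- enum 'I_n) F i = \sum_(i < n) F i.
Proof. by rewrite big_enum; apply: eq_bigl => i; rewrite inE. Qed.

Section FractionRepr.
Variable R : idomainType.

Lemma frac_repr (g : {fraction R}) : g = (\n_(repr g))%:F / (\d_(repr g))%:F.
Proof.
apply: (@mulIf _ (\d_(repr g))%:F); first by rewrite tofrac_eq0 denom_ratioP.
rewrite mulfVK ?tofrac_eq0 ?denom_ratioP // -{1}[g]reprK /tofrac -?lock.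
rewrite -[LHS]FracField.pi_mul; apply/eqmodP => /=.
by rewrite FracField.equivfE /FracField.mulf !numden_Ratio ?mulr1 ?oner_neq0
  ?denom_ratioP // mulrC.
Qed.

Lemma tofrac_div_eq (a b c d : R) : b != 0 -> d != 0 ->
  a * d = c * b -> a%:F / b%:F = c%:F / d%:F.
Proof. by move=> b0 d0 e; apply/eqP; rewrite eqr_div ?tofrac_eq0 // -!tofracM e. Qed.

End FractionRepr.

Section FracMDeriv.
Variables (R : idomainType) (n : nat).
Implicit Types (p q : {mpoly R[n]}) (g h : {fraction {mpoly R[n]}}).

Definition frac_mderiv (i : 'I_n) g :=
  let r := repr g in
  ((mderiv i (\n_r) * \d_r - \n_r * mderiv i (\d_r))%:F) / ((\d_r ^+ 2)%:F).

Lemma frac_mderiv_div i p q : q != 0 ->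
  frac_mderiv i (p%:F / q%:F) = (p^`M(i) * q - p * q^`M(i))%:F / (q ^+ 2)%:F.
Proof.
move=> q0; rewrite {1}/frac_mderiv; set r := repr _.
set N := \n_r; set D := \d_r; have D0 : D != 0 by apply: denom_ratioP.
have E : N * q = p * D.
  have /eqP := frac_repr (p%:F / q%:F).
  by rewrite eqr_div ?tofrac_eq0 // -!tofracM tofrac_eq => /eqP.
have E' := congr1 (mderiv i) E; rewrite !mderivM in E'.
apply: tofrac_div_eq; rewrite ?expf_neq0 //; apply/eqP; rewrite -subr_eq0.
have -> : (N^`M(i) * D - N * D^`M(i)) * q ^+ 2 - (p^`M(i) * q - p * q^`M(i)) * D ^+ 2
   = D * q * ((N^`M(i) * q + N * q^`M(i)) - (p^`M(i) * D + p * D^`M(i)))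
     + (D^`M(i) * q + q^`M(i) * D) * (p * D - N * q) by ring.
by rewrite E' E !subrr mulr0 mulr0 addr0.
Qed.

Lemma frac_mderiv_tofrac i p : frac_mderiv i p%:F = (p^`M(i))%:F.
Proof.
rewrite -[p%:F]divr1 -tofrac1 frac_mderiv_div ?oner_neq0 //.
by rewrite -mpolyC1 mderivC mulr0 subr0 mulr1 expr1n tofrac1 divr1.
Qed.

Lemma frac_mderiv0 i : frac_mderiv i 0 = 0.
Proof. by rewrite -tofrac0 frac_mderiv_tofrac mderiv0. Qed.

Lemma frac_mderivD i g h : frac_mderiv i (g + h) = frac_mderiv i g + frac_mderiv i h.
Proof.
rewrite [g]frac_repr [h]frac_repr.
set a := \n_ _; set b := \d_ _; set c := \n_ _; set d := \d_ _.
have b0 : b != 0 by apply: denom_ratioP.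
have d0 : d != 0 by apply: denom_ratioP.
rewrite addf_div ?tofrac_eq0 // -!tofracM -tofracD.
rewrite !frac_mderiv_div ?mulf_neq0 // addf_div ?tofrac_eq0 ?expf_neq0 //.
rewrite -!tofracM -tofracD; apply: tofrac_div_eq; rewrite ?mulf_neq0 ?expf_neq0 //.
by rewrite !mderivD !mderivM; ring.
Qed.

Lemma frac_mderivMl i p h :
  frac_mderiv i (p%:F * h) = (p^`M(i))%:F * h + p%:F * frac_mderiv i h.
Proof.
rewrite [h]frac_repr; set c := \n_ _; set d := \d_ _.
have d0 : d != 0 by apply: denom_ratioP.
rewrite mulrA -tofracM !frac_mderiv_div // !mulrA -!tofracM.
rewrite addf_div ?tofrac_eq0 ?expf_neq0 // -!tofracM -tofracD.
apply: tofrac_div_eq; rewrite ?mulf_neq0 ?expf_neq0 //.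
by rewrite !mderivM; ring.
Qed.

Lemma frac_mderivC i j h :
  frac_mderiv i (frac_mderiv j h) = frac_mderiv j (frac_mderiv i h).
Proof.
rewrite [h]frac_repr; set a := \n_ _; set b := \d_ _.
have b0 : b != 0 by apply: denom_ratioP.
rewrite (frac_mderiv_div j a b0) (frac_mderiv_div i a b0).
rewrite !frac_mderiv_div ?expf_neq0 //; apply: tofrac_div_eq; rewrite ?expf_neq0 //.
rewrite !mderivB !mderivM !expr2 ?mderivM.
by rewrite [a^`M(j)^`M(i)]mderiv_comm [b^`M(j)^`M(i)]mderiv_comm; ring.
Qed.

End FracMDeriv.

Section PowerDenominators.
Variables (R : idomainType) (n : nat) (F : {mpoly R[n]}).
Hypothesis F0 : F != 0.

Definition dstep (i : 'I_n) (x : {mpoly R[n]} * nat) :=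
  (x.1^`M(i) * F - x.1 * F^`M(i) *+ x.2, x.2.+1).

Definition pow_frac (x : {mpoly R[n]} * nat) := x.1%:F / (F ^+ x.2)%:F.

Lemma mulr_mderivXn (i : 'I_n) k : F * (F ^+ k)^`M(i) = F ^+ k * F^`M(i) *+ k.
Proof.
elim: k => [|k IHk]; first by rewrite expr0 -mpolyC1 mderivC mulr0 mulr0n.
by rewrite exprS mderivM mulrDr IHk mulrSr; ring.
Qed.

Lemma frac_mderiv_pow_frac (i : 'I_n) x :
  frac_mderiv i (pow_frac x) = pow_frac (dstep i x).
Proof.
rewrite /pow_frac frac_mderiv_div ?expf_neq0 //; apply: tofrac_div_eq; rewrite ?expf_neq0 //.
case: x => N k /=; rewrite exprSr.
have -> : (N^`M(i) * F ^+ k - N * (F ^+ k)^`M(i)) * (F ^+ k * F) =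
    N^`M(i) * F ^+ k * F ^+ k * F - N * F ^+ k * (F * (F ^+ k)^`M(i)) by ring.
by rewrite mulr_mderivXn; ring.
Qed.

Lemma foldr_dstep_snd (b : 'I_n -> nat) x (s : seq 'I_n) :
  (foldr (fun i y => iter (b i) (dstep i) y) x s).2 = (x.2 + \sum_(i <- s) b i)%N.
Proof.
elim: s => [|j s IH] /=; first by rewrite big_nil addn0.
rewrite big_cons addnCA -IH; elim: (b j) => [|u IHu] //=.
by rewrite IHu addSn.
Qed.

End PowerDenominators.

Section WeightedInitialForms.
Variables (R : nzRingType) (n : nat) (w : 'rV[RR]_n).
Implicit Types (p q : {mpoly R[n]}) (s t : RR).

Definition wdeg (a : 'X_{1..n}) : RR := \sum_(i < n) (a i)%:R * w 0 i.

Lemma wdeg0 : wdeg 0%MM = 0.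
Proof. by rewrite /wdeg big1 // => i _; rewrite mnm0E mul0r. Qed.

Lemma wdegD a b : wdeg (a + b)%MM = wdeg a + wdeg b.
Proof. by rewrite /wdeg -big_split; apply: eq_bigr => i _; rewrite mnmDE natrD mulrDl. Qed.

Lemma wdegU (i : 'I_n) : wdeg U_(i)%MM = w 0 i.
Proof.
rewrite /wdeg (bigD1 i) //= mnm1E eqxx mul1r big1 ?addr0 // => j ji.
by rewrite mnm1E eq_sym (negbTE ji) mul0r.
Qed.

Definition supp_in (Q : 'X_{1..n} -> Prop) p := forall m, p@_m != 0 -> Q m.

Definition whomog s := supp_in (fun m => wdeg m = s).
Definition wabove s := supp_in (fun m => s < wdeg m).

(* [q] is the part of [p] of [w]-degree [s] and [p] has no monomial of smaller
   [w]-degree: when [q != 0], [q] is the [w]-initial form of [p]. *)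
Definition winit s p q := whomog s q /\ wabove s (p - q).

Lemma supp_inW (Q1 Q2 : 'X_{1..n} -> Prop) p :
  (forall m, Q1 m -> Q2 m) -> supp_in Q1 p -> supp_in Q2 p.
Proof. by move=> Q12 Q1p m /Q1p /Q12. Qed.

Lemma supp_in0 Q : supp_in Q 0.
Proof. by move=> m; rewrite mcoeff0 eqxx. Qed.

Lemma supp_inX (Q : 'X_{1..n} -> Prop) a : Q a -> supp_in Q 'X_[a].
Proof. by move=> Qa m; rewrite mcoeffX; have [<-//|_] := eqVneq a m; rewrite eqxx. Qed.

Lemma supp_inZ Q (c : R) p : supp_in Q p -> supp_in Q (c *: p).
Proof. by move=> Qp m; rewrite -!mcoeff_msupp => /msuppZ_le; rewrite mcoeff_msupp => /Qp. Qed.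

Lemma supp_inD Q p q : supp_in Q p -> supp_in Q q -> supp_in Q (p + q).
Proof.
move=> Qp Qq m; rewrite -mcoeff_msupp => /msuppD_le.
by rewrite mem_cat !mcoeff_msupp => /orP[/Qp | /Qq].
Qed.

Lemma supp_inN Q p : supp_in Q p -> supp_in Q (- p).
Proof. by move=> Qp m; rewrite mcoeffN oppr_eq0 => /Qp. Qed.

Lemma supp_inMn Q p k : supp_in Q p -> supp_in Q (p *+ k).
Proof.
move=> Qp m; rewrite mcoeffMn.
by have [/Qp //|/negbNE/eqP ->] := boolP (p@_m != 0); rewrite mul0rn eqxx.
Qed.

Lemma supp_inM (Q1 Q2 Q3 : 'X_{1..n} -> Prop) p q :
  (forall a b, Q1 a -> Q2 b -> Q3 (a + b)%MM) ->
  supp_in Q1 p -> supp_in Q2 q -> supp_in Q3 (p * q).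
Proof.
move=> Q123 Q1p Q2q m; rewrite -mcoeff_msupp => /msuppM_le /allpairsP[[a b] /= [ap bq ->]].
by apply: Q123; [apply: Q1p | apply: Q2q]; rewrite -mcoeff_msupp.
Qed.

Lemma supp_in_mderiv Q (i : 'I_n) p :
  supp_in Q p -> supp_in (fun m => Q (m + U_(i))%MM) p^`M(i).
Proof.
move=> Qp m; rewrite mcoeff_mderiv.
by have [/Qp //|/negbNE/eqP ->] := boolP (p@_(m + U_(i)) != 0); rewrite mul0rn eqxx.
Qed.

Lemma winit_homog s p : whomog s p -> winit s p p.
Proof. by move=> hp; split; rewrite // subrr; apply: supp_in0. Qed.

Lemma winitD s p q p' q' : winit s p q -> winit s p' q' -> winit s (p + p') (q + q').
Proof.
move=> [hq ap] [hq' ap']; split; first exact: supp_inD.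
by rewrite opprD addrACA; apply: supp_inD.
Qed.

Lemma winitN s p q : winit s p q -> winit s (- p) (- q).
Proof. by move=> [hq ap]; split; [apply: supp_inN | rewrite -opprD; apply: supp_inN]. Qed.

Lemma winitB s p q p' q' : winit s p q -> winit s p' q' -> winit s (p - p') (q - q').
Proof. by move=> ipq /winitN; apply: winitD. Qed.

Lemma winitMn s p q k : winit s p q -> winit s (p *+ k) (q *+ k).
Proof. by move=> [hq ap]; split; [|rewrite -mulrnBl]; apply: supp_inMn. Qed.

Lemma winitM s t p q p' q' : winit s p q -> winit t p' q' -> winit (s + t) (p * p') (q * q').
Proof.
move=> [hq ap] [hq' ap']; split.
  by apply: supp_inM hq hq' => a b <- <-; rewrite wdegD.
have -> : p * p' - q * q' = (p - q) * q' + q * (p' - q') + (p - q) * (p' - q').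
  by rewrite addrAC -mulrDr subrKC mulrBl mulrBr addrA subrK.
apply: supp_inD; first apply: supp_inD.
- by apply: supp_inM ap hq' => a b sa <-; rewrite wdegD ltrD2r.
- by apply: supp_inM hq ap' => a b <- sb; rewrite wdegD ltrD2l.
- by apply: supp_inM ap ap' => a b sa sb; rewrite wdegD ltrD.
Qed.

Lemma winit1 : winit 0 1 1.
Proof. by rewrite -mpolyX0; apply: winit_homog; apply: supp_inX; apply: wdeg0. Qed.

Lemma winitX s p q k : winit s p q -> winit (s *+ k) (p ^+ k) (q ^+ k).
Proof.
move=> ipq; elim: k => [|k IHk]; first by rewrite !expr0 mulr0n; apply: winit1.
by rewrite mulrSr !exprSr; apply: winitM IHk ipq.
Qed.

Lemma winit_mderiv s (i : 'I_n) p q : winit s p q -> winit (s - w 0 i) p^`M(i) q^`M(i).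
Proof.
move=> [hq ap]; split.
  by apply: supp_inW (supp_in_mderiv hq) => m; rewrite wdegD wdegU => <-; rewrite addrK.
rewrite -mderivB; apply: supp_inW (supp_in_mderiv ap) => m.
by rewrite wdegD wdegU ltrBlDr.
Qed.

Lemma winit_lt s t p q : s < t -> winit t p q -> winit s p 0.
Proof.
move=> st [hq ap]; split; first exact: supp_in0.
rewrite subr0 -[p](subrK q); apply: supp_inD.
  by apply: supp_inW ap => m; apply: lt_trans.
by apply: supp_inW hq => m ->.
Qed.

Lemma winit_eq0 s p q : winit s p q -> p = 0 -> q = 0.
Proof.
move=> [hq apq] p0; apply/mpolyP => m; rewrite mcoeff0; apply/eqP/negP => /negP qm.
have := apq m; rewrite p0 sub0r mcoeffN oppr_eq0 => /(_ qm).
by rewrite (hq m qm) ltxx.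
Qed.

Lemma winit_sum (I : eqType) (r : seq I) (Pr : pred I) (t : I -> RR)
    (F G : I -> {mpoly R[n]}) s :
  (forall i, i \in r -> winit (t i) (F i) (G i)) ->
  (forall i, i \in r -> if Pr i then t i = s else s < t i) ->
  winit s (\sum_(i <- r) F i) (\sum_(i <- r | Pr i) G i).
Proof.
move=> iFG ts; rewrite [X in winit _ _ X]big_mkcond.
rewrite [X in winit _ X _]big_seq [X in winit _ _ X]big_seq.
elim/big_rec2: _ => [|i p q ir ipq]; first by apply: winit_homog; apply: supp_in0.
apply: winitD ipq; have := ts i ir; case: (Pr i) => [<-|st]; first exact: iFG.
exact: winit_lt st (iFG i ir).
Qed.

End WeightedInitialForms.

Section InitialFormsOfDerivatives.
Variables (R : idomainType) (n : nat) (w : 'rV[RR]_n) (f g : {mpoly R[n]}) (d : RR).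
Hypothesis fg : winit w d f g.

Definition winit_pair t (x y : {mpoly R[n]} * nat) := x.2 = y.2 /\ winit w t x.1 y.1.

Lemma winit_pair_dstep (i : 'I_n) t x y : winit_pair t x y ->
  winit_pair (t + (d - w 0 i)) (dstep f i x) (dstep g i y).
Proof.
case: x y => [N k] [N' k'] [/= <- NN']; split=> //=; apply: winitB.
  by rewrite addrCA addrC; apply: winitM (winit_mderiv i NN') fg.
by apply: winitMn; apply: winitM NN' (winit_mderiv i fg).
Qed.

End InitialFormsOfDerivatives.

Section NewtonPolytopeFace.
Variables (n : nat) (w : 'rV[RR]_n) (f : {mpoly CC[n]}).

Lemma newton_polytope_expv m : m \in msupp f -> newton_polytope f (expv m).
Proof.
move=> mf; exists (fun m' => (m' == m)%:R); split => [m'||i]; rewrite ?ler0n //.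
  by rewrite (bigD1_seq m) ?msupp_uniq //= eqxx big1 ?addr0 // => m' /negbTE ->.
rewrite (bigD1_seq m) ?msupp_uniq //= eqxx mul1r big1 ?addr0 //.
by move=> m' /negbTE ->; rewrite mul0r.
Qed.

Lemma newton_polytope_pairing_ge s v : (forall m, m \in msupp f -> s <= wdeg w m) ->
  newton_polytope f v -> s <= pairing v w.
Proof.
move=> sf [lam [lam0 lam1 hv]].
have -> : pairing v w = \sum_(m <- msupp f) lam m * wdeg w m.
  rewrite /pairing; under eq_bigr do rewrite hv mulr_suml.
  rewrite exchange_big /=; apply: eq_bigr => m _.
  by rewrite /wdeg mulr_sumr; apply: eq_bigr => i _; rewrite mulrA.
rewrite -[s]mulr1 -lam1 mulr_sumr !big_seq; apply: ler_sum => m mf.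
by rewrite mulrC ler_wpM2l ?sf.
Qed.

Variable m0 : 'X_{1..n}.
Hypotheses (m0f : m0 \in msupp f)
  (m0_min : forall m, m \in msupp f -> wdeg w m0 <= wdeg w m).

Lemma face_expvE m : m \in msupp f ->
  face f w (expv m) <-> wdeg w m = wdeg w m0.
Proof.
move=> mf; split=> [[_ mmin]|mm0].
  by apply/eqP; rewrite eq_le m0_min // andbT (mmin _ (newton_polytope_expv m0f)).
split=> [|v]; first exact: newton_polytope_expv.
by rewrite [pairing _ _]mm0; apply: newton_polytope_pairing_ge.
Qed.

Lemma mcoeff_face_poly m : (face_poly f w)@_m =
  if (m \in msupp f) && (wdeg w m == wdeg w m0) then f@_m else 0.
Proof.
rewrite /face_poly raddf_sum /=.
rewrite (eq_big_seq (fun m' => if wdeg w m' == wdeg w m0 then f@_m' * (m' == m)%:R else 0)).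
  have [mf|mf] /= := boolP (m \in msupp f).
    rewrite (bigD1_seq m) ?msupp_uniq //= eqxx mulr1 big1 ?addr0 //.
    by move=> m' /negbTE ->; rewrite mulr0 if_same.
  rewrite big1_seq // => m' /= m'f; case: eqP => [e|]; rewrite ?mulr0 //.
  by case: eqP m'f => [->|]; rewrite ?(negbTE mf) ?mulr0.
move=> m' m'f; case: ClassicalEpsilon.excluded_middle_informative => [fm|nfm].
  by rewrite ((face_expvE m'f).1 fm) eqxx mcoeffZ mcoeffX.
by case: eqP => [/(face_expvE m'f)|]; rewrite ?mcoeff0.
Qed.

Lemma winit_face_poly : winit w (wdeg w m0) f (face_poly f w).
Proof.
split=> m; rewrite ?mcoeffB mcoeff_face_poly.
  by case: ifP => [/andP[_ /eqP] //|]; rewrite eqxx.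
have [mf|mf] /= := boolP (m \in msupp f); last first.
  by rewrite subr0 -mcoeff_msupp (negbTE mf).
have [_|mm0 _] := eqVneq (wdeg w m) (wdeg w m0); first by rewrite subrr eqxx.
by rewrite lt_neqAle eq_sym mm0 m0_min.
Qed.

Lemma face_poly_neq0 : face_poly f w != 0.
Proof.
apply/eqP => f0; have := mcoeff_face_poly m0.
by rewrite f0 mcoeff0 m0f eqxx /= => /esym/eqP; rewrite mcoeff_eq0 m0f.
Qed.

End NewtonPolytopeFace.

Section WeylAction.
Variable n : nat.
Local Notation Poly := {mpoly CC[n]}.
Local Notation RatF := {fraction Poly}.
Implicit Types (P Q : Weyl n) (g : RatF).

Lemma frac_derivE (i : 'I_n) g : frac_deriv i g = frac_mderiv i g.
Proof. by []. Qed.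

Lemma xpartD (m1 m2 : 'X_{1..n + n}) : xpart (m1 + m2) = (xpart m1 + xpart m2)%MM.
Proof. by apply/mnmP => j; rewrite !(mnmE, mnmDE). Qed.

Lemma dpartD (m1 m2 : 'X_{1..n + n}) : dpart (m1 + m2) = (dpart m1 + dpart m2)%MM.
Proof. by apply/mnmP => j; rewrite !(mnmE, mnmDE). Qed.

Lemma xpartB (m1 m2 : 'X_{1..n + n}) : xpart (m1 - m2) = (xpart m1 - xpart m2)%MM.
Proof. by apply/mnmP => j; rewrite !(mnmE, mnmBE). Qed.

Lemma dpartB (m1 m2 : 'X_{1..n + n}) : dpart (m1 - m2) = (dpart m1 - dpart m2)%MM.
Proof. by apply/mnmP => j; rewrite !(mnmE, mnmBE). Qed.

Lemma xpartUl (i : 'I_n) : xpart U_(lshift n i) = U_(i)%MM.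
Proof. by apply/mnmP => j; rewrite !mnmE (inj_eq (@lshift_inj _ _)). Qed.

Lemma dpartUl (i : 'I_n) : dpart U_(lshift n i) = 0%MM.
Proof. by apply/mnmP => j; rewrite !mnmE eq_lrshift. Qed.

Lemma xpartUr (i : 'I_n) : xpart U_(rshift n i) = 0%MM.
Proof. by apply/mnmP => j; rewrite !mnmE eq_rlshift. Qed.

Lemma dpartUr (i : 'I_n) : dpart U_(rshift n i) = U_(i)%MM.
Proof. by apply/mnmP => j; rewrite !mnmE (inj_eq (@rshift_inj _ _)). Qed.

Lemma act_seq P g (s : seq 'X_{1..n + n}) : uniq s -> {subset msupp P <= s} ->
  act P g = \sum_(m <- s) ((P@_m)%:MP : Poly)%:F * mon_act (xpart m) (dpart m) g.
Proof.
move=> us sPs; rewrite /act [RHS](bigID (mem (msupp P))) /=.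
rewrite [X in _ = _ + X]big1 ?addr0; last first.
  by move=> m; rewrite mcoeff_msupp negbK => /eqP ->; rewrite mpolyC0 tofrac0 mul0r.
rewrite -[RHS]big_filter; apply/perm_big/uniq_perm; rewrite ?filter_uniq ?msupp_uniq //.
by move=> m; rewrite mem_filter; apply/idP/andP => [mP|[]//]; split => //; apply: sPs.
Qed.

Lemma act0 g : act 0 g = 0.
Proof. by rewrite (@act_seq _ _ [::]) ?big_nil // => m; rewrite msupp0. Qed.

Lemma actD P Q g : act (P + Q) g = act P g + act Q g.
Proof.
set s := undup (msupp P ++ msupp Q).
have us : uniq s by apply: undup_uniq.
rewrite (@act_seq (P + Q) g s us); last by move=> m /msuppD_le; rewrite mem_undup.
rewrite (@act_seq P g s us); last by move=> m mP; rewrite mem_undup mem_cat mP.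
rewrite (@act_seq Q g s us); last by move=> m mQ; rewrite mem_undup mem_cat mQ orbT.
rewrite -big_split /=; apply: eq_bigr => m _.
by rewrite mcoeffD mpolyCD tofracD mulrDl.
Qed.

Lemma act_sum (I : Type) (r : seq I) (Pr : pred I) (F : I -> Weyl n) g :
  act (\sum_(i <- r | Pr i) F i) g = \sum_(i <- r | Pr i) act (F i) g.
Proof. exact: (big_morph (fun P => act P g) (fun P Q => actD P Q g) (act0 g)). Qed.

Lemma act_scaleX (c : CC) (m : 'X_{1..n + n}) g :
  act (c *: 'X_[m]) g = ((c%:MP : Poly))%:F * mon_act (xpart m) (dpart m) g.
Proof.
rewrite (@act_seq _ g [:: m]) // => [|m' /msuppZ_le]; last by rewrite msuppX.
by rewrite big_seq1 mcoeffZ mcoeffX eqxx mulr1.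
Qed.

Lemma act_monomials P g : act P g = \sum_(m <- msupp P) act (P@_m *: 'X_[m]) g.
Proof. by apply: eq_bigr => m _; rewrite act_scaleX. Qed.

Lemma actZ c P g : act (c *: P) g = ((c%:MP : Poly))%:F * act P g.
Proof.
rewrite {1}(mpolyE P) scaler_sumr act_sum act_monomials mulr_sumr.
by apply: eq_bigr => m _; rewrite scalerA !act_scaleX mpolyCM tofracM mulrA.
Qed.

Lemma act_weyl_x (i : 'I_n) P g : act (weyl_x i P) g = ('X_i : Poly)%:F * act P g.
Proof.
rewrite /weyl_x {1}(mpolyE P) mulr_sumr act_sum act_monomials mulr_sumr.
apply: eq_bigr => m _; rewrite -scalerAr -mpolyXD !act_scaleX.
rewrite xpartD dpartD xpartUl dpartUl add0m /mon_act mpolyXD tofracM.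
by rewrite -!mulrA mulrCA.
Qed.

Definition mderivF (b : 'X_{1..n}) g :=
  foldr (fun i h => iter (b i) (frac_deriv i) h) g (enum 'I_n).

Lemma mderivF_U (i : 'I_n) b g : mderivF (U_(i) + b)%MM g = frac_deriv i (mderivF b g).
Proof.
rewrite /mderivF; have : uniq (enum 'I_n) by apply: enum_uniq.
have : i \in enum 'I_n by rewrite mem_enum.
elim: (enum 'I_n) => [//|j s IH] /=; rewrite in_cons mnmDE mnm1E => iS /andP[js us].
case: (eqVneq i j) => [<-{j} | ji] in iS js *.
  rewrite add1n iterS; congr (frac_deriv i (iter _ _ _)).
  apply: eq_in_foldr => j' j's /=; rewrite mnmDE mnm1E.
  by have [ij'|//] := eqVneq i j'; rewrite ij' j's in js.
rewrite add0n IH //; elim: (b j) => [//|k IHk] /=.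
by rewrite IHk; apply: frac_mderivC.
Qed.

Lemma act_weyl_d_monomial (i : 'I_n) (c : CC) (m : 'X_{1..n + n}) g :
  act (weyl_d i (c *: 'X_[m])) g = frac_deriv i (act (c *: 'X_[m]) g).
Proof.
rewrite /weyl_d -scalerAr -mpolyXD mderivZ mderivX scalerA actD !act_scaleX.
rewrite xpartD dpartD xpartUr dpartUr add0m xpartB dpartB xpartUl dpartUl subm0.
rewrite /mon_act -!/(mderivF _ _) mderivF_U [in RHS]mulrA -[in RHS]tofracM.
rewrite !frac_derivE frac_mderivMl mderiv_mulC mderivX.
have -> : m (lshift n i) = xpart m i by rewrite mnmE.
by rewrite -mul_mpolyC mpolyCM !tofracM; ring.
Qed.

Lemma act_weyl_d (i : 'I_n) P g : act (weyl_d i P) g = frac_deriv i (act P g).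
Proof.
rewrite {1}(mpolyE P) /weyl_d mulr_sumr raddf_sum -big_split /= act_sum.
rewrite act_monomials frac_derivE (big_morph _ (frac_mderivD i) (frac_mderiv0 _ i)).
by apply: eq_bigr => m _; apply: act_weyl_d_monomial.
Qed.

Lemma act_weyl_mul A P g : act P g = 0 -> act (weyl_mul A P) g = 0.
Proof.
move=> Pg; rewrite /weyl_mul act_sum big1 // => m _; rewrite actZ /weyl_mon_mul.
set Q := foldr _ _ _; suff -> : act Q g = 0 by rewrite mulr0.
apply: (@foldr_iter_ind _ _ (fun Q => act Q g = 0)).
  by move=> i Q' Q'g; rewrite act_weyl_x Q'g mulr0.
apply: (@foldr_iter_ind _ _ (fun Q => act Q g = 0)) => // i Q' Q'g.
by rewrite act_weyl_d Q'g frac_derivE frac_mderiv0.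
Qed.

Lemma lideal_gen_sub_Ann (S : Weyl n -> Prop) g P :
  (forall Q, S Q -> Ann g Q) -> lideal_gen S P -> Ann g P.
Proof.
move=> SAnn; elim=> {P} [Q /SAnn //| | P Q _ Pg _ Qg | A P _ Pg].
- exact: act0.
- by rewrite /Ann actD Pg Qg addr0.
- exact: act_weyl_mul.
Qed.

End WeylAction.

Lemma weightE (n : nat) (w : 'rV[RR]_n) (m : 'X_{1..n + n}) :
  weight w m = wdeg w (dpart m) - wdeg w (xpart m).
Proof. by rewrite /weight /wdeg -sumrB; apply: eq_bigr => i _; rewrite mulNr addrC. Qed.

Section InitialFormAnnihilates.
Variables (n : nat) (w : 'rV[RR]_n) (l : nat) (P : Weyl n).
Local Notation Poly := {mpoly CC[n]}.

Definition deriv_numer (F : Poly) (m : 'X_{1..n + n}) : Poly :=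
  (foldr (fun i x => iter (dpart m i) (dstep F i) x) (1, l) (enum 'I_n)).1.

Definition ddeg (m : 'X_{1..n + n}) := (l + \sum_(i <- enum 'I_n) dpart m i)%N.

(* Any common upper bound of the [ddeg m] would do. *)
Definition Kdeg := (\sum_(m <- msupp P) ddeg m)%N.

Definition cleared_term (F : Poly) (m : 'X_{1..n + n}) : Poly :=
  P@_m *: 'X_[xpart m] * deriv_numer F m * F ^+ (Kdeg - ddeg m).

Lemma ddeg_le_Kdeg m : m \in msupp P -> (ddeg m <= Kdeg)%N.
Proof. by move=> mP; rewrite /Kdeg (bigD1_seq m) ?msupp_uniq //= leq_addr. Qed.

Lemma act_inv_pow_monomial (F : Poly) m : F != 0 -> m \in msupp P ->
  act (P@_m *: 'X_[m]) (inv_pow F l) * (F ^+ Kdeg)%:F = (cleared_term F m)%:F.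
Proof.
move=> F0 mP; have -> : inv_pow F l = pow_frac F (1, l) by rewrite /pow_frac tofrac1 div1r.
rewrite act_scaleX /mon_act -/(mderivF _ _).
have -> : mderivF (dpart m) (pow_frac F (1, l)) =
    pow_frac F (foldr (fun i x => iter (dpart m i) (dstep F i) x) (1, l) (enum 'I_n)).
  by rewrite (foldr_iter_morph _ _ _ (fun i x => esym (frac_mderiv_pow_frac F0 i x))).
rewrite /pow_frac foldr_dstep_snd -/(deriv_numer F m) -/(ddeg m) -(subnKC (ddeg_le_Kdeg mP)).
have D0 : (F ^+ ddeg m)%:F != 0 by rewrite tofrac_eq0 expf_neq0.
by rewrite /cleared_term -mul_mpolyC exprD !tofracM !mulrA divfK.
Qed.

Lemma act_inv_pow_sum (F : Poly) (Pr : pred 'X_{1..n + n}) : F != 0 ->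
  act (\sum_(m <- msupp P | Pr m) P@_m *: 'X_[m]) (inv_pow F l) * (F ^+ Kdeg)%:F
  = (\sum_(m <- msupp P | Pr m) cleared_term F m)%:F.
Proof.
move=> F0; rewrite act_sum mulr_suml rmorph_sum big_seq_cond [RHS]big_seq_cond.
by apply: eq_bigr => m /andP[mP _]; apply: act_inv_pow_monomial.
Qed.

Lemma winit_cleared_term (f ft : Poly) d m : winit w d f ft -> m \in msupp P ->
  winit w (d *+ (Kdeg - l) - weight w m) (cleared_term f m) (cleared_term ft m).
Proof.
move=> fft mP.
have one_l : winit_pair w 0 ((1 : Poly), l) ((1 : Poly), l) by split=> //; apply: winit1.
have [_ numer_init] := foldr_iter_rel (dpart m) (enum 'I_n) (winit_pair_dstep fft) one_l.
have monomial_homog : whomog w (wdeg w (xpart m)) (P@_m *: 'X_[xpart m]).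
  by apply: supp_inZ; apply: supp_inX.
have := winitM (winitM (winit_homog monomial_homog) numer_init) (winitX (Kdeg - ddeg m) fft).
congr winit; rewrite weightE.
have -> : (Kdeg - l = \sum_(i <- enum 'I_n) dpart m i + (Kdeg - ddeg m))%N.
  by move: (ddeg_le_Kdeg mP); rewrite /ddeg; lia.
have -> : \sum_(i <- enum 'I_n) (d - w 0 i) *+ dpart m i =
    d *+ (\sum_(i <- enum 'I_n) dpart m i) - wdeg w (dpart m).
  rewrite -sumrMnr !sum_enum_ord /wdeg -sumrB; apply: eq_bigr => i _.
  by rewrite mulrnBl mulr_natl.
rewrite mulrnDr; ring.
Qed.

Lemma Ann_in_form (f : Poly) : f != 0 -> P != 0 ->
  Ann (inv_pow f l) P -> Ann (inv_pow (face_poly f w) l) (in_form w P).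
Proof.
move=> f0 P0 Pf; set ismax := fun m => all (fun m' => weight w m' <= weight w m) (msupp P).
have [m0 m0f m0_min] : exists2 m0, m0 \in msupp f & forall m, m \in msupp f ->
    wdeg w m0 <= wdeg w m by apply: seq_argmin; rewrite msupp_eq0.
have [M MP M_max] : exists2 M, M \in msupp P & forall m, m \in msupp P ->
    - weight w M <= - weight w m by apply: seq_argmin; rewrite msupp_eq0.
have ft0 := face_poly_neq0 m0f m0_min.
have sum0 : \sum_(m <- msupp P) cleared_term f m = 0.
  have := act_inv_pow_sum predT f0.
  rewrite -mpolyE [act _ _]Pf mul0r => /esym/eqP.
  by rewrite tofrac_eq0 => /eqP.
have init : winit w (wdeg w m0 *+ (Kdeg - l) - weight w M)
    (\sum_(m <- msupp P) cleared_term f m)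
    (\sum_(m <- msupp P | ismax m) cleared_term (face_poly f w) m).
  apply: winit_sum => m mP; first exact: winit_cleared_term (winit_face_poly m0f m0_min) mP.
  have /[!lerN2] mM := M_max m mP; rewrite /ismax.
  case: allP => [/(_ M MP) Mm | /allP/allPn[m' m'P]].
    by rewrite (@le_anti _ _ (weight w m) (weight w M)) ?mM.
  by rewrite -ltNge ltrD2l ltrN2 => /lt_le_trans; apply; rewrite -lerN2 M_max.
have ft_sum0 := winit_eq0 init sum0.
have := act_inv_pow_sum ismax ft0.
rewrite ft_sum0 tofrac0 => /eqP.
by rewrite mulf_eq0 tofrac_eq0 expf_eq0 (negbTE ft0) andbF orbF => /eqP.
Qed.

End InitialFormAnnihilates.

Theorem mainTheorem6 (n : nat) (f : {mpoly CC[n]}) (l : nat) (w : 'rV[RR]_n) :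
  f != 0 -> w != 0 ->
  forall P : Weyl n,
    in_ideal w (Ann (inv_pow f l)) P ->
    Ann (inv_pow (face_poly f w) l) P.
Proof.
move=> f0 _ P; apply: lideal_gen_sub_Ann => _ [Q [Qf Q0 ->]].
exact: Ann_in_form.
Qed.
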